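(* In the discrete setting of the context, consider $$\widetilde{\mathbf{P}}^{-1}\frac{d\mathbf{Q}}{dt}=\sum_{\xi}D_{-\xi}\,\mathbf{F}_\xi(\mathbf{Q})+\sum_{\xi}\mathbf{B}^h_\xi(\mathbf{Q})+\sum_{\xi}\big(\mathbf{SAT}_{\xi,0}+\mathbf{SAT}_{\xi,n_\xi}\big),$$ where, for $a\in\{0,n_\xi\}$, $\mathbf{SAT}_{\xi,a}$ vanishes except at grid points with $\xi$-index $a$, where it equals $-\frac{1}{h^{(\xi)}_a}J\sqrt{\xi_x^2+\xi_y^2+\xi_z^2}\,\mathbf{s}_a$ with $$\mathbf{s}_0=\big(G_x,G_y,G_z,-n_x\widetilde G_x,-n_y\widetilde G_y,-n_z\widetilde G_z,-(n_y\widetilde G_x+n_x\widetilde G_y),-(n_z\widetilde G_x+n_x\widetilde G_z),-(n_z\widetilde G_y+n_y\widetilde G_z)\big)^T,$$ $$\mathbf{s}_{n_\xi}=\big(G_x,G_y,G_z,n_x\widetilde G_x,n_y\widetilde G_y,n_z\widetilde G_z,n_y\widetilde G_x+n_x\widetilde G_y,n_z\widetilde G_x+n_x\widetilde G_z,n_z\widetilde G_y+n_y\widetilde G_z\big)^T,$$ and $\mathbf{G},\widetilde{\mathbf{G}}$ are the penalty vectors defined in the context (computed at that face point). Then every differentiable solution satisfies $$\frac{dE_h}{dt}=F_{luc}+\sum_{\xi\in\{q,r,s\}}\Big(\mathbb{I}_{\xi,n_\xi}(\widehat{\mathbf{v}}^T\widehat{\mathbf{T}})-\mathbb{I}_{\xi,0}(\widehat{\mathbf{v}}^T\widehat{\mathbf{T}})\Big)\le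 0,\qquad F_{luc}:=-\sum_{\xi\in\{q,r,s\}}\sum_{a\in\{0,n_\xi\}}\mathbb{I}_{\xi,a}\Big(\sum_{\eta\in\{n,m,l\}}\frac{G_\eta^2}{Z_\eta}\Big)\le0,$$ where $\widehat{\mathbf{v}}^T\widehat{\mathbf{T}}=\sum_{\eta}\widehat v_\eta\widehat T_\eta$.
   Context: Discrete setting: for $\xi\in\{q,r,s\}$ fix $n_\xi\ge1$, a diagonal matrix $H_\xi=\mathrm{diag}(h^{(\xi)}_0,\dots,h^{(\xi)}_{n_\xi})$ with positive entries, and real $(n_\xi+1)\times(n_\xi+1)$ matrices $D_{+\xi},D_{-\xi}$ with $(D_{+\xi}f)^TH_\xi g+f^TH_\xi(D_{-\xi}g)=f_{n_\xi}g_{n_\xi}-f_0g_0$ for all $f,g\in\mathbb{R}^{n_\xi+1}$. A 3D grid function $f=(f_{ijk})$ has $0\le i\le n_q$, $0\le j\le n_r$, $0\le k\le n_s$; $D_{\pm q}$ acts on the index $i$, i.e. $(D_{\pm q}f)_{ijk}=\sum_{i'}(D_{\pm q})_{ii'}f_{i'jk}$, and similarly $D_{\pm r}$ on $j$ and $D_{\pm s}$ on $k$; applied to vector-valued grid functions they act componentwise. Given are grid functions $J_{ijk}>0$, for each $\xi$ metric values $(\xi_x,\xi_y,\xi_z)_{ijk}\in\mathbb{R}^3\setminus\{0\}$, density $\rho_{ijk}>0$ and symmetric positive definite $6\times6$ compliance matrices $\mathbf{S}_{ijk}$; $\widetilde{\mathbf{P}}^{-1}_{ijk}=J_{ijk}\,\mathrm{diag}(\rho_{ijk}I_3,\mathbf{S}_{ijk})$.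 The unknown is $\mathbf{Q}_{ijk}=(\mathbf{v},\boldsymbol\sigma)_{ijk}$ with $\mathbf{v}=(v_x,v_y,v_z)$, $\boldsymbol\sigma=(\sigma_{xx},\sigma_{yy},\sigma_{zz},\sigma_{xy},\sigma_{xz},\sigma_{yz})$, and $\boldsymbol\sigma_{\mathrm{mat}}$ the symmetric $3\times3$ stress matrix. Pointwise flux: $\mathbf{F}_\xi(\mathbf{Q})$ has first three entries $J(\xi_x\sigma_{xx}+\xi_y\sigma_{xy}+\xi_z\sigma_{xz})$, $J(\xi_x\sigma_{xy}+\xi_y\sigma_{yy}+\xi_z\sigma_{yz})$, $J(\xi_x\sigma_{xz}+\xi_y\sigma_{yz}+\xi_z\sigma_{zz})$ and last six entries $0$. Discrete non-conservative term: with $w_\alpha=D_{+\xi}v_\alpha$, $\mathbf{B}^h_\xi(\mathbf{Q})$ has first three entries $0$ and entries 4–9 equal to $J\xi_xw_x$, $J\xi_yw_y$, $J\xi_zw_z$, $J(\xi_yw_x+\xi_xw_y)$, $J(\xi_zw_x+\xi_xw_z)$, $J(\xi_zw_y+\xi_yw_z)$. Discrete energy: $E_h=\frac12\sum_{i,j,k}h^{(q)}_ih^{(r)}_jh^{(s)}_k\,\mathbf{Q}_{ijk}^T\widetilde{\mathbf{P}}^{-1}_{ijk}\mathbf{Q}_{ijk}$. Face cubature: for $a\in\{0,n_q\}$, $\mathbb{I}_{q,a}(f)=\sum_{j,k}h^{(r)}_jh^{(s)}_k\,J_{ajk}\sqrt{q_x^2+q_y^2+q_z^2}\big|_{ajk}\,f_{ajk}$;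 analogously $\mathbb{I}_{r,a}(f)=\sum_{i,k}h^{(q)}_ih^{(s)}_kJ_{iak}\sqrt{r_x^2+r_y^2+r_z^2}|_{iak}f_{iak}$ for $a\in\{0,n_r\}$ and $\mathbb{I}_{s,a}(f)=\sum_{i,j}h^{(q)}_ih^{(r)}_jJ_{ija}\sqrt{s_x^2+s_y^2+s_z^2}|_{ija}f_{ija}$ for $a\in\{0,n_s\}$. Boundary data at each grid point on a face of direction $\xi$ with index $a\in\{0,n_\xi\}$: $\mathbf{n}=(n_x,n_y,n_z)^T=(\xi_x,\xi_y,\xi_z)^T/\sqrt{\xi_x^2+\xi_y^2+\xi_z^2}$, $\mathbf{T}=\boldsymbol\sigma_{\mathrm{mat}}\mathbf{n}$; $(\mathbf{n},\mathbf{m},\mathbf{l})$ is any orthonormal basis of $\mathbb{R}^3$, $\mathbf{R}$ the orthogonal matrix with rows $\mathbf{n}^T,\mathbf{m}^T,\mathbf{l}^T$, $v_\eta=(\mathbf{R}\mathbf{v})_\eta$, $T_\eta=(\mathbf{R}\mathbf{T})_\eta$, $\eta\in\{n,m,l\}$. Given impedances $Z_\eta>0$ and parameters $\gamma_\eta\in[-1,1]$ (prescribing the boundary conditions $\frac{Z_\eta}{2}(1-\gamma_\eta)v_\eta\mp\frac{1+\gamma_\eta}{2}T_\eta=0$, with $-$ at index $0$ and $+$ at index $n_\xi$). Hat variables: at index $0$, with $q_\eta=\frac12(Z_\eta v_\eta+T_\eta)$, $\widehat v_\eta=(1+\gamma_\eta)q_\eta/Z_\eta$, $\widehat T_\eta=(1-\gamma_\eta)q_\eta$;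 at index $n_\xi$, with $p_\eta=\frac12(Z_\eta v_\eta-T_\eta)$, $\widehat v_\eta=(1+\gamma_\eta)p_\eta/Z_\eta$, $\widehat T_\eta=-(1-\gamma_\eta)p_\eta$. Penalties: $G_\eta=\frac12Z_\eta(v_\eta-\widehat v_\eta)-\frac12(T_\eta-\widehat T_\eta)$ at index $0$, $G_\eta=\frac12Z_\eta(v_\eta-\widehat v_\eta)+\frac12(T_\eta-\widehat T_\eta)$ at index $n_\xi$; $\widetilde G_\eta=G_\eta/Z_\eta$; and $\mathbf{G}=(G_x,G_y,G_z)^T=\mathbf{R}^T(G_n,G_m,G_l)^T$, $\widetilde{\mathbf{G}}=(\widetilde G_x,\widetilde G_y,\widetilde G_z)^T=\mathbf{R}^T(\widetilde G_n,\widetilde G_m,\widetilde G_l)^T$. *)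

From HB Require Import structures.
From mathcomp Require Import all_boot all_order all_algebra.
From mathcomp Require Import all_classical all_reals all_analysis.
Set Implicit Arguments. Unset Strict Implicit. Unset Printing Implicit Defensive.
Import Order.TTheory GRing.Theory Num.Theory.
Local Open Scope ring_scope.

Inductive dir := Dq | Dr | Ds.
Definition dirs : seq dir := [:: Dq; Dr; Ds].
(** Face sides: [false] = index 0, [true] = index n_xi. *)
Definition sides : seq bool := [:: false; true].

Section Grid.
Variable R : realType.
(** n d = n_xi ; grid indices 0..n_xi are 'I_(n d).+1 *)
Variable n : dir -> nat.

Definition pt : finType := ('I_(n Dq).+1 * 'I_(n Dr).+1 * 'I_(n Ds).+1)%type.

Definition idx (d : dir) (p : pt) : 'I_(n d).+1 :=
  match d as d0 return 'I_(n d0).+1 with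
  | Dq => p.1.1 | Dr => p.1.2 | Ds => p.2 end.

Definition applyD (V : lmodType R) (d : dir) (D : 'M[R]_((n d).+1))
    (f : pt -> V) (p : pt) : V :=
  match d as d0 return 'M[R]_((n d0).+1) -> V with
  | Dq => fun D => \sum_(i < (n Dq).+1) D p.1.1 i *: f (i, p.1.2, p.2)
  | Dr => fun D => \sum_(i < (n Dr).+1) D p.1.2 i *: f (p.1.1, i, p.2)
  | Ds => fun D => \sum_(i < (n Ds).+1) D p.2 i *: f (p.1.1, p.1.2, i)
  end D.

Definition hvol (h : forall d, 'I_(n d).+1 -> R) (p : pt) : R :=
  h Dq p.1.1 * h Dr p.1.2 * h Ds p.2.

Definition hperp (h : forall d, 'I_(n d).+1 -> R) (d : dir) (p : pt) : R :=
  match d with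
  | Dq => h Dr p.1.2 * h Ds p.2
  | Dr => h Dq p.1.1 * h Ds p.2
  | Ds => h Dq p.1.1 * h Dr p.1.2
  end.

Definition on_face (d : dir) (a : bool) (p : pt) : bool :=
  (idx d p : nat) == (if a then n d else 0%N).

End Grid.
Arguments applyD {R n V} d D f p.
Arguments idx {n} d p.
Arguments on_face {n} d a p.
Arguments hperp {R n} h d p.
Arguments hvol {R n} h p.

Section Pointwise.
Variable R : realType.

Definition norm3 (k : 'cV[R]_3) : R := Num.sqrt (\sum_(i < 3) k i 0 ^+ 2).

Definition c3 (k : 'cV[R]_3) (i : nat) : R := k (inord i) 0.
Definition c6 (s : 'cV[R]_6) (i : nat) : R := s (inord i) 0.

(** sigma = (sxx, syy, szz, sxy, sxz, syz) -> symmetric 3x3 stress matrix *)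
Definition sigma_mat (s : 'cV[R]_6) : 'M[R]_3 :=
  \matrix_(i < 3, j < 3)
    nth 0 [:: c6 s 0; c6 s 3; c6 s 4;
              c6 s 3; c6 s 1; c6 s 5;
              c6 s 4; c6 s 5; c6 s 2] (3 * i + j)%N.

Definition sym_op (k w : 'cV[R]_3) : 'cV[R]_6 :=
  \col_(i < 6)
    nth 0 [:: c3 k 0 * c3 w 0; c3 k 1 * c3 w 1; c3 k 2 * c3 w 2;
              c3 k 1 * c3 w 0 + c3 k 0 * c3 w 1;
              c3 k 2 * c3 w 0 + c3 k 0 * c3 w 2;
              c3 k 2 * c3 w 1 + c3 k 1 * c3 w 2] i.

Definition vel (Q : 'cV[R]_(3 + 6)) : 'cV[R]_3 := usubmx Q.
Definition str (Q : 'cV[R]_(3 + 6)) : 'cV[R]_6 := dsubmx Q.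

(** pointwise flux F_xi(Q), with J and metric vector k = (xi_x, xi_y, xi_z) *)
Definition flux (J : R) (k : 'cV[R]_3) (Q : 'cV[R]_(3 + 6)) : 'cV[R]_(3 + 6) :=
  col_mx (J *: (sigma_mat (str Q) *m k)) 0.

(** discrete non-conservative term B^h_xi, with w = D_{+xi} v at the point *)
Definition Bterm (J : R) (k w : 'cV[R]_3) : 'cV[R]_(3 + 6) :=
  col_mx 0 (J *: sym_op k w).

Definition Pinv (J rho : R) (S : 'M[R]_6) : 'M[R]_(3 + 6) :=
  J *: block_mx (rho *: 1%:M) 0 0 S.

(** boundary data at a face point: the vectors m, l, impedances Z_eta, parameters gamma_eta
    (eta = 0,1,2 stands for n, m, l) *)
Record bdata := BData {
  bm : 'cV[R]_3; bl : 'cV[R]_3; bZ : 'I_3 -> R; bg : 'I_3 -> R }.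

Definition nvec (k : 'cV[R]_3) : 'cV[R]_3 := (norm3 k)^-1 *: k.

Definition Rot (k : 'cV[R]_3) (b : bdata) : 'M[R]_3 :=
  \matrix_(i < 3, j < 3) (nth 0 [:: nvec k; bm b; bl b] i) j 0.

Definition trac (k : 'cV[R]_3) (Q : 'cV[R]_(3 + 6)) : 'cV[R]_3 :=
  sigma_mat (str Q) *m nvec k.

Definition v_eta (k : 'cV[R]_3) (b : bdata) (Q : 'cV[R]_(3 + 6)) (e : 'I_3) : R :=
  (Rot k b *m vel Q) e 0.
Definition T_eta (k : 'cV[R]_3) (b : bdata) (Q : 'cV[R]_(3 + 6)) (e : 'I_3) : R :=
  (Rot k b *m trac k Q) e 0.

(** characteristic: q_eta at index 0 (a = false), p_eta at index n (a = true) *)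
Definition charv (a : bool) k b Q (e : 'I_3) : R :=
  if a then (bZ b e * v_eta k b Q e - T_eta k b Q e) / 2
  else (bZ b e * v_eta k b Q e + T_eta k b Q e) / 2.

Definition vhat (a : bool) k b Q (e : 'I_3) : R :=
  (1 + bg b e) * charv a k b Q e / bZ b e.
Definition That (a : bool) k b Q (e : 'I_3) : R :=
  if a then - ((1 - bg b e) * charv a k b Q e) else (1 - bg b e) * charv a k b Q e.

Definition Gpen (a : bool) k b Q (e : 'I_3) : R :=
  if a then bZ b e / 2 * (v_eta k b Q e - vhat a k b Q e)
            + (T_eta k b Q e - That a k b Q e) / 2
  else bZ b e / 2 * (v_eta k b Q e - vhat a k b Q e)
            - (T_eta k b Q e - That a k b Q e) / 2.
Definition Gtil (a : bool) k b Q (e : 'I_3) : R := Gpen a k b Q e / bZ b e.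

Definition Gvec a k b Q : 'cV[R]_3 := (Rot k b)^T *m \col_(e < 3) Gpen a k b Q e.
Definition Gtvec a k b Q : 'cV[R]_3 := (Rot k b)^T *m \col_(e < 3) Gtil a k b Q e.

Definition svec (a : bool) k b Q : 'cV[R]_(3 + 6) :=
  col_mx (Gvec a k b Q)
    (if a then sym_op (nvec k) (Gtvec a k b Q) else - sym_op (nvec k) (Gtvec a k b Q)).

Definition vThat a k b Q : R := \sum_(e < 3) vhat a k b Q e * That a k b Q e.
Definition G2Z a k b Q : R := \sum_(e < 3) Gpen a k b Q e ^+ 2 / bZ b e.

End Pointwise.

Section Scheme.
Variable R : realType.
Variable n : dir -> nat.
Variable h : forall d, 'I_(n d).+1 -> R.
Variable J : pt n -> R.
Variable met : dir -> pt n -> 'cV[R]_3.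

Definition Icub (d : dir) (a : bool) (f : pt n -> R) : R :=
  \sum_(p : pt n | on_face d a p) hperp h d p * J p * norm3 (met d p) * f p.

Variable Dp Dm : forall d, 'M[R]_((n d).+1).
Variable bd : dir -> bool -> pt n -> bdata R.

Definition SAT (d : dir) (a : bool) (Q : pt n -> 'cV[R]_(3 + 6)) (p : pt n)
    : 'cV[R]_(3 + 6) :=
  if on_face d a p then
    (- (@h d (idx d p))^-1 * J p * norm3 (met d p)) *: svec a (met d p) (bd d a p) (Q p)
  else 0.

Definition rhs (Q : pt n -> 'cV[R]_(3 + 6)) (p : pt n) : 'cV[R]_(3 + 6) :=
  \sum_(d <- dirs)
    (applyD d (Dm d) (fun p' => flux (J p') (met d p') (Q p')) p
     + Bterm (J p) (met d p) (applyD d (Dp d) (fun p' => vel (Q p')) p)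
     + SAT d false Q p + SAT d true Q p).

Variable rho : pt n -> R.
Variable S : pt n -> 'M[R]_6.

Definition Eh (Q : pt n -> 'cV[R]_(3 + 6)) : R :=
  1 / 2 * \sum_(p : pt n) hvol h p * ((Q p)^T *m Pinv (J p) (rho p) (S p) *m Q p) 0 0.

Definition Fluc (Q : pt n -> 'cV[R]_(3 + 6)) : R :=
  - \sum_(d <- dirs) \sum_(a <- sides)
      Icub d a (fun p => G2Z a (met d p) (bd d a p) (Q p)).

Definition Bdry (Q : pt n -> 'cV[R]_(3 + 6)) : R :=
  \sum_(d <- dirs)
    (Icub d true (fun p => vThat true (met d p) (bd d true p) (Q p))
     - Icub d false (fun p => vThat false (met d p) (bd d false p) (Q p))).

End Scheme.

Definition dQdt (R : realType) (n : dir -> nat) (Q : R -> pt n -> 'cV[R]_(3 + 6))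
    (t : R) (p : pt n) : 'cV[R]_(3 + 6) :=
  \col_(i < 3 + 6) derive1 (fun s => Q s p i 0) t.

From HB Require Import structures.
From mathcomp Require Import all_boot all_order all_algebra.
From mathcomp Require Import all_classical all_reals all_analysis.
From mathcomp Require Import ring lra.
Import Order.TTheory GRing.Theory Num.Theory.
Local Open Scope ring_scope.

(* Along a solution, dE_h/dt = sum_p hvol_p Q_p . rhs_p, since P~^{-1} is
   symmetric ([energy_is_derive]).  For each direction xi, the part of the
   right-hand side belonging to xi, tested with Q, is evaluated in three steps:
   - volume terms: the flux difference pairs with the velocity and the
     non-conservative term with the stress; these pairings are adjoint
     ([dot_sym_op]), so summation by parts ([grid_sbp]) leaves only the
     boundary power v . T on the two xi-faces ([volume_energy]);
   - penalty terms contribute face sums of v . G +/- G~ . T ([sat_energy]);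
   - at each face point, in the orthonormal frame (n, m, l) these combine into
     the power vhat . That of the boundary data minus sum_eta G_eta^2 / Z_eta
     ([penalty_identity], [face_identity], [face_energy]).
   Summing over directions gives dE_h/dt = F_luc + Bdry ([energy_rate]);
   F_luc <= 0 because Z_eta > 0 and Bdry <= 0 because |gamma_eta| <= 1
   ([Fluc_le0], [Bdry_le0]). *)

Section InnerProduct.
Context {R : realType}.

Definition dot {m} (x y : 'cV[R]_m) : R := (x^T *m y) 0 0.

Lemma dotE {m} (x y : 'cV[R]_m) : dot x y = \sum_i x i 0 * y i 0.
Proof. by rewrite /dot mxE; apply: eq_bigr => i _; rewrite mxE. Qed.

Lemma dotDr {m} (x y z : 'cV[R]_m) : dot x (y + z) = dot x y + dot x z.
Proof. by rewrite /dot mulmxDr mxE. Qed.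

Lemma dotZr {m} (x y : 'cV[R]_m) c : dot x (c *: y) = c * dot x y.
Proof. by rewrite /dot -scalemxAr mxE. Qed.

Lemma dotNr {m} (x y : 'cV[R]_m) : dot x (- y) = - dot x y.
Proof. by rewrite /dot mulmxN mxE. Qed.

Lemma dot0r {m} (x : 'cV[R]_m) : dot x 0 = 0.
Proof. by rewrite /dot mulmx0 mxE. Qed.

Lemma dot_sumr {m} (I : Type) (r : seq I) (x : 'cV[R]_m) (F : I -> 'cV[R]_m) :
  dot x (\sum_(i <- r) F i) = \sum_(i <- r) dot x (F i).
Proof. by rewrite /dot mulmx_sumr summxE. Qed.

Lemma dot_split {m1 m2} (X Y : 'cV[R]_(m1 + m2)) :
  dot X Y = dot (usubmx X) (usubmx Y) + dot (dsubmx X) (dsubmx Y).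
Proof.
by rewrite /dot -{1}(vsubmxK X) -{1}(vsubmxK Y) tr_col_mx mul_row_col mxE.
Qed.

Lemma dot_trmx {m k} (M : 'M[R]_(k, m)) (x : 'cV[R]_m) (y : 'cV[R]_k) :
  dot x (M^T *m y) = dot (M *m x) y.
Proof. by rewrite /dot trmx_mul mulmxA. Qed.

Lemma dot_orth {m} (M : 'M[R]_m) (x y : 'cV[R]_m) :
  M^T *m M = 1%:M -> dot (M *m x) (M *m y) = dot x y.
Proof. by move=> HM; rewrite -dot_trmx mulmxA HM mul1mx. Qed.

End InnerProduct.

Section Elasticity.
Context {R : realType}.

Lemma sum_ord3 (V : nmodType) (F : 'I_3 -> V) :
  \sum_(i < 3) F i = F (inord 0) + F (inord 1) + F (inord 2).
Proof.
rewrite !big_ord_recr big_ord0 /= add0r.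
by congr (F _ + F _ + F _); apply: val_inj; rewrite /= inordK.
Qed.

Lemma sum_ord6 (V : nmodType) (F : 'I_6 -> V) :
  \sum_(i < 6) F i = F (inord 0) + F (inord 1) + F (inord 2)
    + F (inord 3) + F (inord 4) + F (inord 5).
Proof.
rewrite !big_ord_recr big_ord0 /= add0r.
by congr (F _ + F _ + F _ + F _ + F _ + F _); apply: val_inj; rewrite /= inordK.
Qed.

(** The symmetric-gradient operator [sym_op k] is the adjoint of
    [s |-> sigma_mat s *m k]: this is why the non-conservative term [Bterm]
    pairs with the flux in the energy estimate. *)
Lemma dot_sym_op (s : 'cV[R]_6) (k w : 'cV[R]_3) :
  dot s (sym_op k w) = dot w (sigma_mat s *m k).
Proof. by rewrite /dot !mxE sum_ord6 sum_ord3 !mxE !sum_ord3 !mxE !inordK //= /c6 /c3; ring. Qed.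

Lemma norm3_gt0 (k : 'cV[R]_3) : k != 0 -> 0 < norm3 k.
Proof.
move=> Hk; rewrite /norm3 sqrtr_gt0 lt_def sumr_ge0 ?andbT => [|i _]; last exact: sqr_ge0.
apply: contra Hk => /eqP H0; apply/eqP/matrixP => i j; rewrite (ord1 j) mxE.
have /eqP := @psumr_eq0P _ _ xpredT _ (fun i _ => sqr_ge0 (k i 0)) H0 i isT.
by rewrite sqrf_eq0 => /eqP.
Qed.

Lemma sigma_mat_trac {k : 'cV[R]_3} X : k != 0 ->
  sigma_mat (str X) *m k = norm3 k *: trac k X.
Proof.
move=> Hk; rewrite /trac /nvec -scalemxAr scalerA mulfV ?scale1r //.
by rewrite gt_eqF // norm3_gt0.
Qed.

(** Outward orientation of the face with index 0 ([false]) or [n_xi] ([true]). *)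
Definition side_sign (a : bool) : R := if a then 1 else -1.

Lemma penalty_identity a k (b : bdata R) X e : 0 < bZ b e ->
  side_sign a * (v_eta k b X e * T_eta k b X e)
  - (v_eta k b X e * Gpen a k b X e + side_sign a * (Gtil a k b X e * T_eta k b X e))
  = side_sign a * (vhat a k b X e * That a k b X e) - Gpen a k b X e ^+ 2 / bZ b e.
Proof.
move=> HZ; have HZ0 : bZ b e != 0 by rewrite gt_eqF.
by rewrite /Gtil /Gpen /vhat /That /charv; case: a => /=; field.
Qed.

(** The same balance in Cartesian components: rotate into the orthonormal
    frame (n, m, l) and sum [penalty_identity] over the three characteristics. *)
Lemma face_identity a k (b : bdata R) X :
  Rot k b *m (Rot k b)^T = 1%:M -> (forall e, 0 < bZ b e) ->
  side_sign a * dot (vel X) (trac k X)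
    - (dot (vel X) (Gvec a k b X) + side_sign a * dot (Gtvec a k b X) (trac k X))
  = side_sign a * vThat a k b X - G2Z a k b X.
Proof.
move=> HR HZ; rewrite -(dot_orth _ (vel X) _ (mulmx1C HR)) /Gvec /Gtvec dot_trmx.
rewrite -[dot (_^T *m _) _]dot_trmx trmxK !dotE /vThat /G2Z !mulr_sumr.
rewrite -sumrB -big_split -sumrB /=; apply: eq_bigr => e _.
by have := penalty_identity a k b X e (HZ e); rewrite /v_eta /T_eta !mxE.
Qed.

Lemma G2Z_ge0 a k (b : bdata R) X : (forall e, 0 < bZ b e) -> 0 <= G2Z a k b X.
Proof. by move=> HZ; apply: sumr_ge0 => e _; rewrite divr_ge0 ?sqr_ge0 // ltW. Qed.

(** For |gamma| <= 1 the boundary data never inject energy through the face: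
    [vhat That = (1 + gamma)(1 - gamma) charv^2 / Z] carries the inward sign. *)
Lemma boundary_power_le0 a k (b : bdata R) X :
  (forall e, 0 < bZ b e) -> (forall e, -1 <= bg b e <= 1) ->
  side_sign a * vThat a k b X <= 0.
Proof.
move=> HZ Hg; rewrite mulr_sumr; apply: sumr_le0 => e _.
have /andP [g1 g2] := Hg e.
have [gp gm] : 0 <= 1 + bg b e /\ 0 <= 1 - bg b e by split; lra.
have Hc : 0 <= (1 + bg b e) * (1 - bg b e) * (charv a k b X e ^+ 2 / bZ b e).
  by apply: mulr_ge0; [exact: mulr_ge0 | exact: divr_ge0 (sqr_ge0 _) (ltW (HZ e))].
by rewrite /vhat /That; case: a Hc => /=; nra.
Qed.

End Elasticity.

Definition applyDs (R : realType) (n : dir -> nat) (d : dir) (D : 'M[R]_((n d).+1))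
    (F : pt n -> R) (p : pt n) : R :=
  match d as d0 return 'M[R]_((n d0).+1) -> R with
  | Dq => fun D => \sum_(i < (n Dq).+1) D p.1.1 i * F (i, p.1.2, p.2)
  | Dr => fun D => \sum_(i < (n Dr).+1) D p.1.2 i * F (p.1.1, i, p.2)
  | Ds => fun D => \sum_(i < (n Ds).+1) D p.2 i * F (p.1.1, p.1.2, i)
  end D.
Arguments applyDs {R n} d D F p.

Section SummationByParts.
Context {R : realType} {n : dir -> nat} {h : forall d, 'I_(n d).+1 -> R}.
Context {Dp Dm : forall d, 'M[R]_((n d).+1)}.

Lemma applyD_entry d (D : 'M[R]_((n d).+1)) m k (f : pt n -> 'M[R]_(m, k)) p a b :
  (applyD d D f p) a b = applyDs d D (fun p' => f p' a b) p.
Proof. by case: d D => D /=; rewrite summxE; apply: eq_bigr => i _; rewrite mxE. Qed.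

Lemma applyDs_ext d (D : 'M[R]_((n d).+1)) (F G : pt n -> R) p :
  F =1 G -> applyDs d D F p = applyDs d D G p.
Proof. by move=> E; case: d D => D /=; apply: eq_bigr => i _; rewrite E. Qed.

Lemma applyDs0 d (D : 'M[R]_((n d).+1)) p : applyDs d D (fun _ => 0) p = 0.
Proof. by case: d D => D /=; rewrite big1 // => i _; rewrite mulr0. Qed.

Lemma hvol_hperp d p : (forall d i, 0 < h d i) ->
  hvol h p * (h d (idx d p))^-1 = hperp h d p.
Proof. by move=> Hh; case: d; rewrite /hvol /hperp /=; field; rewrite gt_eqF. Qed.

Lemma hperp_ge0 d p : (forall d i, 0 < h d i) -> 0 <= hperp h d p.
Proof. by move=> Hh; case: d; rewrite /hperp mulr_ge0 // ltW. Qed.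

Hypothesis Hsbp : forall d (f g : 'cV[R]_((n d).+1)),
  ((Dp d *m f)^T *m diag_mx (\row_i h d i) *m g
   + f^T *m diag_mx (\row_i h d i) *m (Dm d *m g)) 0 0
  = f ord_max 0 * g ord_max 0 - f ord0 0 * g ord0 0.

Lemma line_sbp d (f g : 'I_(n d).+1 -> R) :
  \sum_i h d i * ((\sum_j Dp d i j * f j) * g i + f i * (\sum_j Dm d i j * g j))
  = f ord_max * g ord_max - f ord0 * g ord0.
Proof.
have := Hsbp d (\col_i f i) (\col_i g i); rewrite !mul_mx_diag !mxE => <-.
rewrite -big_split /=; apply: eq_bigr => i _; rewrite !mxE.
under [X in _ = X * _ * _ + _]eq_bigr do rewrite mxE.
under [X in _ = _ + _ * X]eq_bigr do rewrite mxE.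
ring.
Qed.

Lemma sum_pt (F : pt n -> R) :
  \sum_p F p = \sum_i \sum_j \sum_k F (i, j, k).
Proof.
rewrite (eq_bigr (fun p => F (p.1, p.2))); last by move=> [[i j] k].
rewrite -(pair_big xpredT xpredT (fun x k => F (x, k))) /=.
rewrite (eq_bigr (fun x => \sum_k F ((x.1, x.2), k))); last by move=> [i j].
by rewrite -(pair_big xpredT xpredT (fun i j => \sum_k F ((i, j), k))).
Qed.

Lemma sum_at_last m (X : 'I_m.+1 -> R) :
  \sum_(i < m.+1) (if (i : nat) == m then X i else 0) = X ord_max.
Proof. by rewrite -big_mkcond /= (eq_bigl (pred1 ord_max)) ?big_pred1_eq. Qed.

Lemma sum_at_first m (X : 'I_m.+1 -> R) :
  \sum_(i < m.+1) (if (i : nat) == 0%N then X i else 0) = X ord0.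
Proof. by rewrite -big_mkcond /= (eq_bigl (pred1 ord0)) ?big_pred1_eq. Qed.

Lemma grid_sbp d (F G : pt n -> R) :
  \sum_p hvol h p * (applyDs d (Dp d) F p * G p + F p * applyDs d (Dm d) G p)
  = \sum_(p | on_face d true p) hperp h d p * (F p * G p)
    - \sum_(p | on_face d false p) hperp h d p * (F p * G p).
Proof.
rewrite !(big_mkcond (on_face _ _)) !sum_pt /on_face.
case: d => /=.
- rewrite exchange_big [X in _ = X - _]exchange_big [X in _ = _ - X]exchange_big.
  rewrite -sumrB; apply: eq_bigr => j _; rewrite exchange_big.
  rewrite [X in _ = X - _]exchange_big [X in _ = _ - X]exchange_big.
  rewrite -sumrB; apply: eq_bigr => k _; rewrite sum_at_last sum_at_first.
  rewrite (eq_bigr (fun i => h Dr j * h Ds k * (h Dq i *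
     ((\sum_i' Dp Dq i i' * F (i', j, k)) * G (i, j, k) +
      F (i, j, k) * (\sum_i' Dm Dq i i' * G (i', j, k)))))) => [|i _]; last by rewrite /hvol; ring.
  by rewrite -mulr_sumr (line_sbp Dq (fun i => F (i, j, k))) /hperp /=; ring.
- rewrite -sumrB; apply: eq_bigr => i _.
  rewrite exchange_big [X in _ = X - _]exchange_big [X in _ = _ - X]exchange_big.
  rewrite -sumrB; apply: eq_bigr => k _; rewrite sum_at_last sum_at_first.
  rewrite (eq_bigr (fun j => h Dq i * h Ds k * (h Dr j *
     ((\sum_i' Dp Dr j i' * F (i, i', k)) * G (i, j, k) +
      F (i, j, k) * (\sum_i' Dm Dr j i' * G (i, i', k)))))) => [|j _]; last by rewrite /hvol; ring.
  by rewrite -mulr_sumr (line_sbp Dr (fun j => F (i, j, k))) /hperp /=; ring.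
- rewrite -sumrB; apply: eq_bigr => i _; rewrite -sumrB; apply: eq_bigr => j _.
  rewrite sum_at_last sum_at_first.
  rewrite (eq_bigr (fun k => h Dq i * h Dr j * (h Ds k *
     ((\sum_i' Dp Ds k i' * F (i, j, i')) * G (i, j, k) +
      F (i, j, k) * (\sum_i' Dm Ds k i' * G (i, j, i')))))) => [|k _]; last by rewrite /hvol; ring.
  by rewrite -mulr_sumr (line_sbp Ds (fun k => F (i, j, k))) /hperp /=; ring.
Qed.

End SummationByParts.

Section EnergyIdentity.
Context {R : realType} {n : dir -> nat} {h : forall d, 'I_(n d).+1 -> R}.
Context {Dp Dm : forall d, 'M[R]_((n d).+1)} {J : pt n -> R}.
Context {met : dir -> pt n -> 'cV[R]_3} {bd : dir -> bool -> pt n -> bdata R}.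

Hypothesis Hh : forall d i, 0 < h d i.
Hypothesis Hsbp : forall d (f g : 'cV[R]_((n d).+1)),
  ((Dp d *m f)^T *m diag_mx (\row_i h d i) *m g
   + f^T *m diag_mx (\row_i h d i) *m (Dm d *m g)) 0 0
  = f ord_max 0 * g ord_max 0 - f ord0 0 * g ord0 0.
Hypothesis HJ : forall p, 0 < J p.
Hypothesis Hmet : forall d p, met d p != 0.
Hypothesis Hbd : forall d a p, on_face d a p ->
  Rot (met d p) (bd d a p) *m (Rot (met d p) (bd d a p))^T = 1%:M
  /\ (forall e, 0 < bZ (bd d a p) e)
  /\ (forall e, -1 <= bg (bd d a p) e <= 1).

(** The volume terms of direction [d] tested against the state: the flux
    difference pairs with the velocity, the non-conservative term (through
    [dot_sym_op]) with the stress, producing the integrand of [grid_sbp]. *)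
Lemma volume_pairing (Qt : pt n -> 'cV[R]_(3 + 6)) d p :
  dot (Qt p) (applyD d (Dm d) (fun p' => flux (J p') (met d p') (Qt p')) p)
  + dot (Qt p) (Bterm (J p) (met d p) (applyD d (Dp d) (fun p' => vel (Qt p')) p))
  = \sum_(a < 3) (applyDs d (Dp d) (fun p' => vel (Qt p') a 0) p
                    * (J p * (sigma_mat (str (Qt p)) *m met d p) a 0)
                  + vel (Qt p) a 0
                    * applyDs d (Dm d) (fun p' => J p' * (sigma_mat (str (Qt p')) *m met d p') a 0) p).
Proof.
rewrite !dot_split /Bterm col_mxKu col_mxKd dot0r add0r dotZr.
rewrite -[dsubmx (Qt p)]/(str (Qt p)) dot_sym_op.
have -> : dot (dsubmx (Qt p))
   (dsubmx (applyD d (Dm d) (fun p' => flux (J p') (met d p') (Qt p')) p)) = 0.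
  rewrite dotE big1 // => i _; rewrite [X in _ * X]mxE applyD_entry.
  rewrite (@applyDs_ext _ _ _ _ _ (fun _ => 0)) ?applyDs0 ?mulr0 // => p'.
  by rewrite /flux col_mxEd mxE.
rewrite addr0 !dotE mulr_sumr -big_split /=; apply: eq_bigr => a _.
rewrite ![usubmx _ _ _]mxE !applyD_entry.
rewrite (@applyDs_ext _ _ _ _ _ (fun p' => J p' * (sigma_mat (str (Qt p')) *m met d p') a 0)).
  by rewrite /vel; ring.
by move=> p'; rewrite /flux col_mxEu mxE.
Qed.

(** Energy of the volume terms: by summation by parts only the boundary
    power [v . T] on the two faces of direction [d] remains. *)
Lemma volume_energy (Qt : pt n -> 'cV[R]_(3 + 6)) d :
  \sum_p hvol h p *
    (dot (Qt p) (applyD d (Dm d) (fun p' => flux (J p') (met d p') (Qt p')) p)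
     + dot (Qt p) (Bterm (J p) (met d p) (applyD d (Dp d) (fun p' => vel (Qt p')) p)))
  = Icub h J met d true (fun p => dot (vel (Qt p)) (trac (met d p) (Qt p)))
    - Icub h J met d false (fun p => dot (vel (Qt p)) (trac (met d p) (Qt p))).
Proof.
under eq_bigr do rewrite volume_pairing mulr_sumr.
rewrite exchange_big /=.
under eq_bigr => a _ do rewrite (grid_sbp Hsbp d (fun p' => vel (Qt p') a 0)
        (fun p' => J p' * (sigma_mat (str (Qt p')) *m met d p') a 0)).
rewrite sumrB [X in X - _]exchange_big [X in _ - X]exchange_big /=.
congr (_ - _); apply: eq_bigr => p _;
  rewrite -mulrA -dotZr -(sigma_mat_trac (Qt p) (Hmet d p)) dotE !mulr_sumr;
  by apply: eq_bigr => a _; rewrite /vel; ring.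
Qed.


Lemma sat_energy (Qt : pt n -> 'cV[R]_(3 + 6)) d a :
  \sum_p hvol h p * dot (Qt p) (SAT h J met bd d a Qt p)
  = - Icub h J met d a (fun p =>
        dot (vel (Qt p)) (Gvec a (met d p) (bd d a p) (Qt p))
        + side_sign a * dot (Gtvec a (met d p) (bd d a p) (Qt p)) (trac (met d p) (Qt p))).
Proof.
rewrite /Icub -sumrN [RHS]big_mkcond /=; apply: eq_bigr => p _; rewrite /SAT.
case: ifP => _; last by rewrite dot0r mulr0.
rewrite dotZr dot_split /svec col_mxKu col_mxKd -(hvol_hperp d p Hh).
rewrite -[usubmx (Qt p)]/(vel (Qt p)) -[dsubmx (Qt p)]/(str (Qt p)).
by case: a => /=; rewrite ?dotNr dot_sym_op -/(trac _ _) /side_sign; ring.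
Qed.

Lemma face_energy (Qt : pt n -> 'cV[R]_(3 + 6)) d a :
  side_sign a * Icub h J met d a (fun p => dot (vel (Qt p)) (trac (met d p) (Qt p)))
  - Icub h J met d a (fun p =>
        dot (vel (Qt p)) (Gvec a (met d p) (bd d a p) (Qt p))
        + side_sign a * dot (Gtvec a (met d p) (bd d a p) (Qt p)) (trac (met d p) (Qt p)))
  = side_sign a * Icub h J met d a (fun p => vThat a (met d p) (bd d a p) (Qt p))
    - Icub h J met d a (fun p => G2Z a (met d p) (bd d a p) (Qt p)).
Proof.
rewrite /Icub !mulr_sumr -!sumrB; apply: eq_bigr => p Hp.
have [HR [HZ _]] := Hbd _ _ _ Hp.
set w := hperp h d p * J p * norm3 (met d p).
by rewrite mulrCA [in RHS]mulrCA -!mulrBr face_identity.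
Qed.

Lemma direction_energy (Qt : pt n -> 'cV[R]_(3 + 6)) d :
  \sum_p hvol h p * dot (Qt p)
    (applyD d (Dm d) (fun p' => flux (J p') (met d p') (Qt p')) p
     + Bterm (J p) (met d p) (applyD d (Dp d) (fun p' => vel (Qt p')) p)
     + SAT h J met bd d false Qt p + SAT h J met bd d true Qt p)
  = Icub h J met d true (fun p => vThat true (met d p) (bd d true p) (Qt p))
    - Icub h J met d false (fun p => vThat false (met d p) (bd d false p) (Qt p))
    - \sum_(a <- sides) Icub h J met d a (fun p => G2Z a (met d p) (bd d a p) (Qt p)).
Proof.
under eq_bigr do rewrite !dotDr 2!mulrDr.
rewrite !big_split /= volume_energy !sat_energy.
have := face_energy Qt d true; have := face_energy Qt d false.
rewrite /sides !big_cons big_nil /side_sign /=; lra.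
Qed.

Lemma energy_rate (Qt : pt n -> 'cV[R]_(3 + 6)) :
  \sum_p hvol h p * dot (Qt p) (rhs h J met Dp Dm bd Qt p)
  = Fluc h J met bd Qt + Bdry h J met bd Qt.
Proof.
under eq_bigr do rewrite /rhs dot_sumr mulr_sumr.
rewrite exchange_big /Fluc /Bdry -sumrN -big_split /=.
by apply: eq_bigr => d _; rewrite direction_energy addrC.
Qed.

Lemma Icub_ge0 d a (f : pt n -> R) :
  (forall p, on_face d a p -> 0 <= f p) -> 0 <= Icub h J met d a f.
Proof.
move=> Hf; apply: sumr_ge0 => p Hp.
by rewrite !mulr_ge0 ?Hf ?sqrtr_ge0 ?hperp_ge0 ?ltW.
Qed.

Lemma Icub_le0 d a (f : pt n -> R) :
  (forall p, on_face d a p -> f p <= 0) -> Icub h J met d a f <= 0.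
Proof.
move=> Hf; apply: sumr_le0 => p Hp.
by rewrite mulr_ge0_le0 ?Hf // !mulr_ge0 ?sqrtr_ge0 ?hperp_ge0 ?ltW.
Qed.

Lemma Fluc_le0 (Qt : pt n -> 'cV[R]_(3 + 6)) : Fluc h J met bd Qt <= 0.
Proof.
rewrite /Fluc oppr_le0; apply: sumr_ge0 => d _; apply: sumr_ge0 => a _.
by apply: Icub_ge0 => p Hp; have [_ [HZ _]] := Hbd _ _ _ Hp; exact: G2Z_ge0.
Qed.

Lemma Bdry_le0 (Qt : pt n -> 'cV[R]_(3 + 6)) : Bdry h J met bd Qt <= 0.
Proof.
rewrite /Bdry; apply: sumr_le0 => d _; rewrite subr_le0.
apply: (@le_trans _ _ 0).
- apply: Icub_le0 => p Hp; have [_ [HZ Hg]] := Hbd _ _ _ Hp.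
  by have := boundary_power_le0 true (met d p) _ (Qt p) HZ Hg; rewrite mul1r.
- apply: Icub_ge0 => p Hp; have [_ [HZ Hg]] := Hbd _ _ _ Hp.
  by have := boundary_power_le0 false (met d p) _ (Qt p) HZ Hg; rewrite mulN1r oppr_le0.
Qed.

End EnergyIdentity.

Section EnergyDerivative.
Context {R : realType}.

Lemma is_derive_sum_seq (I : Type) (r : seq I) (f : I -> R -> R) (df : I -> R) (t : R) :
  (forall i, is_derive t 1 (f i) (df i)) ->
  is_derive t 1 (fun s => \sum_(i <- r) f i s) (\sum_(i <- r) df i).
Proof.
move=> Hf; rewrite -fct_sumE.
by elim/big_ind2: _ => // *; [exact: is_derive_cst | exact: is_deriveD].
Qed.

Lemma is_derive_scale (c : R) {f : R -> R} {df t : R} :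
  is_derive t 1 f df -> is_derive t 1 (fun s => c * f s) (c * df).
Proof. exact: is_deriveZ. Qed.

Lemma quad_formE {m} (A : 'M[R]_m) (x y : 'cV[R]_m) :
  (x^T *m A *m y) 0 0 = \sum_i \sum_j x i 0 * (A i j * y j 0).
Proof.
rewrite [RHS]exchange_big mxE; apply: eq_bigr => j _; rewrite mxE mulr_suml.
by apply: eq_bigr => i _; rewrite !mxE mulrA.
Qed.

Lemma is_derive_quad_form {m} (A : 'M[R]_m) (x : R -> 'cV[R]_m) (dx : 'cV[R]_m) (t : R) :
  A^T = A -> (forall i, is_derive t 1 (fun s => x s i 0) (dx i 0)) ->
  is_derive t 1 (fun s => ((x s)^T *m A *m x s) 0 0) (2 * ((x t)^T *m A *m dx) 0 0).
Proof.
move=> HA Hx; under [fun s => _]funext do rewrite quad_formE.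
apply: (is_derive_eq (f' := \sum_i \sum_j
  (x t i 0 * (A i j * dx j 0) + A i j * x t j 0 * dx i 0))).
  apply: is_derive_sum_seq => i; apply: is_derive_sum_seq => j.
  by have := is_deriveM (Hx i) (is_derive_scale (A i j) (Hx j)).
have Hsym i j : A j i = A i j by rewrite -{1}HA mxE.
rewrite quad_formE (eq_bigr _ (fun i _ => big_split _ _ _ _ _)) big_split /=.
rewrite [X in _ + X]exchange_big /= mulr2n mulrDl mul1r; congr (_ + _).
by apply: eq_bigr => i _; apply: eq_bigr => j _; rewrite Hsym; ring.
Qed.

Lemma Pinv_sym (J rho : R) (S : 'M[R]_6) : S^T = S -> (Pinv J rho S)^T = Pinv J rho S.
Proof. by move=> HS; rewrite /Pinv linearZ /= tr_block_mx !trmx0 linearZ /= trmx1 HS. Qed.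

Lemma energy_is_derive {n : dir -> nat} (h : forall d, 'I_(n d).+1 -> R)
    {J rho : pt n -> R} {Smat : pt n -> 'M[R]_6}
    {Q : R -> pt n -> 'cV[R]_(3 + 6)} {G : pt n -> 'cV[R]_(3 + 6)} {t : R} :
  (forall p, (Smat p)^T = Smat p) -> (forall p i, derivable (fun s => Q s p i 0) t 1) ->
  (forall p, Pinv (J p) (rho p) (Smat p) *m dQdt Q t p = G p) ->
  is_derive t 1 (fun s => Eh h J rho Smat (Q s)) (\sum_p hvol h p * dot (Q t p) (G p)).
Proof.
move=> HS Hder Hsol; apply: (is_derive_eq (f' := 1 / 2 * \sum_p hvol h p *
  (2 * ((Q t p)^T *m Pinv (J p) (rho p) (Smat p) *m dQdt Q t p) 0 0))).
  apply: is_derive_scale; apply: is_derive_sum_seq => p; apply: is_derive_scale.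
  apply: is_derive_quad_form; first exact: Pinv_sym.
  by move=> i; rewrite mxE derive1E; exact: derivableP.
rewrite mulr_sumr; apply: eq_bigr => p _.
by rewrite /dot -mulmxA Hsol; field.
Qed.

End EnergyDerivative.

Theorem theorem5p2 (R : realType) (n : dir -> nat)
  (h : forall d, 'I_(n d).+1 -> R)
  (Dp Dm : forall d, 'M[R]_((n d).+1))
  (J rho : pt n -> R) (Smat : pt n -> 'M[R]_6)
  (met : dir -> pt n -> 'cV[R]_3)
  (bd : dir -> bool -> pt n -> bdata R)
  (Q : R -> pt n -> 'cV[R]_(3 + 6)) :
  (forall d, (0 < n d)%N) ->
  (forall d i, 0 < h d i) ->
  (* summation-by-parts property of (D_{+xi}, D_{-xi}) w.r.t. H_xi *)
  (forall d (f g : 'cV[R]_((n d).+1)),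
      ((Dp d *m f)^T *m diag_mx (\row_i h d i) *m g
       + f^T *m diag_mx (\row_i h d i) *m (Dm d *m g)) 0 0
      = f ord_max 0 * g ord_max 0 - f ord0 0 * g ord0 0) ->
  (forall p, 0 < J p) ->
  (forall p, 0 < rho p) ->
  (forall p, (Smat p)^T = Smat p) ->
  (forall p (x : 'cV[R]_6), x != 0 -> 0 < (x^T *m Smat p *m x) 0 0) ->
  (forall d p, met d p != 0) ->
  (* boundary data at every face point *)
  (forall d a p, on_face d a p ->
      Rot (met d p) (bd d a p) *m (Rot (met d p) (bd d a p))^T = 1%:M
      /\ (forall e, 0 < bZ (bd d a p) e)
      /\ (forall e, -1 <= bg (bd d a p) e <= 1)) ->
  (* Q is a differentiable solution of the semi-discrete scheme *)
  (forall t p i, derivable (fun s => Q s p i 0) t 1) ->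
  (forall t p, Pinv (J p) (rho p) (Smat p) *m dQdt Q t p
               = rhs h J met Dp Dm bd (Q t) p) ->
  forall t,
    derivable (fun s => Eh h J rho Smat (Q s)) t 1
    /\ derive1 (fun s => Eh h J rho Smat (Q s)) t
       = Fluc h J met bd (Q t) + Bdry h J met bd (Q t)
    /\ Fluc h J met bd (Q t) + Bdry h J met bd (Q t) <= 0
    /\ Fluc h J met bd (Q t) <= 0.
Proof.
move=> _ Hh Hsbp HJ _ Hsym _ Hmet Hbd Hder Hsol t.
have Hderiv := energy_is_derive h Hsym (Hder t) (Hsol t).
have Hrate := energy_rate Hh Hsbp Hmet Hbd (Q t).
have Hdiss := Fluc_le0 Hh HJ Hbd (Q t).
have Hbdry := Bdry_le0 Hh HJ Hbd (Q t).
split; first exact: ex_derive.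
split; first by rewrite derive1E derive_val Hrate.
by split; first lra.
Qed.
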